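(* Let $n\in\mathbb N$, let $p$ be a prime number, let $m$ be a positive integer, and let $x\in\mathbb Z_n\times\mathbb Z_n$ have order $\operatorname{ord}(x)=p^m$ in the group $\mathbb Z_n\times\mathbb Z_n$. Let $A\subseteq\mathbb Z_n\times\mathbb Z_n$. If $\widehat{\mathbf 1}_A^{sym}(x)=0$, then $$|A\cap\langle px\rangle^{\perp_s}|=p\cdot|A\cap\langle x\rangle^{\perp_s}|.$$
   Context: $\mathbb Z_n$ is the additive cyclic group of order $n$. For $x=(x_1,x_2),y=(y_1,y_2)\in\mathbb Z_n\times\mathbb Z_n$ the symplectic form is $\langle x,y\rangle_s=x_1y_2-x_2y_1\in\mathbb Z_n$. For $A\subseteq\mathbb Z_n\times\mathbb Z_n$ the discrete symplectic Fourier transform of its indicator is $\widehat{\mathbf 1}_A^{sym}(\xi)=\sum_{a\in A}e^{\frac{2\pi i}{n}\langle a,\xi\rangle_s}$. For $x\in\mathbb Z_n\times\mathbb Z_n$, $\langle x\rangle$ denotes the cyclic subgroup generated by $x$. For $H\subseteq\mathbb Z_n\times\mathbb Z_n$, the symplectic orthogonal set is $H^{\perp_s}=\{g\in\mathbb Z_n\times\mathbb Z_n:\langle g,h\rangle_s=0\ \forall h\in H\}$. *)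

From HB Require Import structures.
From mathcomp Require Import all_boot all_order all_algebra all_fingroup all_solvable all_field.
Set Implicit Arguments. Unset Strict Implicit. Unset Printing Implicit Defensive.
Import GRing.Theory Num.Theory.
Local Open Scope ring_scope.

(* Z_n x Z_n is modelled as ('Z_n * 'Z_n); (we require 1 < n in the theorem).
   It carries the componentwise zmodType structure (ring notation: +, *+)
   and, via gproduct's external product, a finGroupType structure whose
   group law is the same componentwise addition (so <[x]> is the cyclic
   subgroup generated by x and #[x] its order). *)

Definition sympl (n : nat) (x y : 'Z_n * 'Z_n) : 'Z_n := x.1 * y.2 - x.2 * y.1.

(* e^{2 pi i / n} in the algebraic complex numbers algC:
   n.-root (-1) is the n-th root of -1 with minimal nonnegative argument,
   i.e. e^{i pi / n}; its square is e^{2 pi i / n}. *)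
Definition omega (n : nat) : algC := (n.-root (-1)) ^+ 2.

Definition symFT (n : nat) (A : {set 'Z_n * 'Z_n}) (xi : 'Z_n * 'Z_n) : algC :=
  \sum_(a in A) omega n ^+ (nat_of_ord (sympl a xi)).

Definition sperp (n : nat) (H : {set 'Z_n * 'Z_n}) : {set 'Z_n * 'Z_n} :=
  [set g | [forall h in H, sympl g h == 0]].

From mathcomp Require Import all_boot all_order all_algebra all_fingroup all_solvable all_field.
From mathcomp Require Import ring lra zify.
Import Order.TTheory GRing.Theory Num.Theory.
Local Open Scope ring_scope.

(* Write <a, x>_s = j(a) n / p^m with 0 <= j(a) < p^m.  The hypothesis says that
   the rational polynomial F = \sum_(a in A) X^j(a) vanishes at a primitive p^m-th
   root of unity, so F = G Phi_(p^m) where Phi_(p^m) = \sum_(k < p) X^(k p^(m-1))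
   and deg G < p^(m-1) because deg F < p^m.  Hence the coefficients of F at the
   indices k p^(m-1), k < p, all agree.  The coefficient at 0 is |A meet <x>^perp|
   and their sum is |A meet <p x>^perp|. *)

(* In coordinates: turning the upper unit vector (x1, y1) by the upper unit vector
   (x2, y2) <> (1, 0), without leaving the upper half plane nor reaching (1, 0),
   lowers the abscissa. *)
Lemma upper_semicircle_rotate_lt {R : realFieldType} {x1 y1 x2 y2 : R} :
  x1 ^+ 2 + y1 ^+ 2 = 1 -> x2 ^+ 2 + y2 ^+ 2 = 1 -> 0 <= y1 -> 0 <= y2 ->
  0 <= x1 * y2 + x2 * y1 -> x1 * x2 - y1 * y2 < 1 -> x2 < 1 ->
  x1 * x2 - y1 * y2 < x1.
Proof.
move=> h1 h2 y1_ge0 y2_ge0 Im_ge0 Re_lt1 x2_lt1.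
have [y2_0|y2_neq0] := eqVneq y2 0.
  have x2N1 : x2 = -1 by subst y2; nra.
  have y1_0 : y1 = 0 by subst; nra.
  by subst; nra.
have y2_gt0 : 0 < y2 by rewrite lt_def y2_neq0.
have [x1_ge0|x1_lt0] := lerP 0 x1.
  have [y1_0|y1_neq0] := eqVneq y1 0; first by subst; nra.
  have : 0 < y1 by rewrite lt_def y1_neq0.
  nra.
have x2_gt0 : 0 < x2 by nra.
nra.
Qed.

Lemma normC1_Re_Im (z : algC) : `|z| = 1 -> 'Re z ^+ 2 + 'Im z ^+ 2 = 1.
Proof. by move=> z1; rewrite -normC2_Re_Im z1 expr1n. Qed.

Lemma ReM_upper_lt (u v : algC) : `|u| = 1 -> `|v| = 1 ->
  0 <= 'Im u -> 0 <= 'Im v -> 0 <= 'Im (u * v) -> 'Re (u * v) < 1 -> 'Re v < 1 ->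
  'Re (u * v) < 'Re u.
Proof.
move=> /normC1_Re_Im u1 /normC1_Re_Im v1; rewrite ReM ImM.
(* algC is not totally ordered, so transport to the real field algR for nra. *)
pose re z : algR := in_algR (Creal_Re z); pose im z : algR := in_algR (Creal_Im z).
have re_im1 z : 'Re z ^+ 2 + 'Im z ^+ 2 = 1 -> re z ^+ 2 + im z ^+ 2 = 1.
  by move=> z1; apply: val_inj.
have := upper_semicircle_rotate_lt (re_im1 _ u1) (re_im1 _ v1).
have le_val (a b : algR) : (a <= b) = (val a <= val b) by [].
have lt_val (a b : algR) : (a < b) = (val a < val b).
  by rewrite !lt_def le_val (inj_eq val_inj).
by rewrite !lt_val !le_val.
Qed.

Lemma normC1_Re_lt1 (z : algC) : `|z| = 1 -> z != 1 -> 'Re z < 1.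
Proof.
move=> z1 z_neq1; have := leif_Re_Creal z; rewrite z1 => /leifP.
by case: ifPn => // z_ge0; rewrite -z1 ger0_norm ?eqxx in z_neq1.
Qed.

Lemma norm_unity_root {R : numDomainType} {N : nat} {z : R} :
  (0 < N)%N -> z ^+ N = 1 -> `|z| = 1.
Proof.
move=> N_gt0 zN; have : `|z| ^+ N = 1 by rewrite -normrX zN normr1.
by move/eqP; rewrite pexpr_eq1 // => /eqP.
Qed.

Lemma nat_sign_change {P : pred nat} {N : nat} : P 0 -> ~~ P N ->
  exists2 j, (j < N)%N & P j && ~~ P j.+1.
Proof.
elim: N => [|N IH] P0 PN; first by rewrite P0 in PN.
have [PN'|nPN'] := boolP (P N); first by exists N; rewrite ?PN' ?PN.
by have [j jN Pj] := IH P0 nPN'; exists j => //; apply: ltnW.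
Qed.

(* y = n.-root (-1) is specified only as the root of z^n = -1 of largest real part
   in the closed upper half plane; that it is exp(i pi / n), i.e. a primitive 2n-th
   root of unity, has to be derived from this. *)
Section RootCN1.
Context {n : nat}.
Hypothesis n_gt1 : (1 < n)%N.
Local Notation y := (n.-root (-1 : algC)).

Let n_gt0 : (0 < n)%N. Proof. exact: ltnW. Qed.

Lemma rootCN1_expr : y ^+ n = -1. Proof. exact: rootCK. Qed.

Lemma norm_neg_unity_root {z : algC} : z ^+ n = -1 -> `|z| = 1.
Proof.
move=> zn; apply: (@norm_unity_root _ n.*2); first by rewrite double_gt0.
by rewrite -muln2 exprM zn sqrrN expr1n.
Qed.

Lemma Re_rootCN1_max {z : algC} : z ^+ n = -1 -> 'Re z <= 'Re y.
Proof.
move=> zn; have [Im_ge0|Im_lt0] := real_leP (real0 algC) (Creal_Im z).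
  exact: rootC_Re_max.
rewrite -Re_conj; apply: rootC_Re_max => //.
  by rewrite -rmorphXn zn rmorphN1.
by rewrite Im_conj oppr_ge0 ltW.
Qed.

Let y_neq0 : y != 0.
Proof. by rewrite -normr_eq0 norm_neg_unity_root ?rootCN1_expr ?oner_eq0. Qed.

(* Both factors turn by a smaller angle than y; one of them is a root of z^n = -1,
   and so would beat y on real parts. *)
Lemma rootCN1_indecomposable (u v : algC) : `|u| = 1 ->
  0 <= 'Im u -> 0 <= 'Im v -> u * v = y -> u ^+ n.*2 = 1 -> u = 1 \/ v = 1.
Proof.
move=> u1 Iu Iv uvy u2n.
have y1 : `|y| = 1 by apply/norm_neg_unity_root/rootCN1_expr.
have v1 : `|v| = 1 by move: y1; rewrite -uvy normrM u1 mul1r.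
have Re_y_lt1 : 'Re y < 1.
  apply: normC1_Re_lt1 => //; apply/eqP => y_eq1; have := rootCN1_expr.
  by rewrite y_eq1 expr1n => /eqP; rewrite -subr_eq0 opprK -mulr2n pnatr_eq0.
have Iy : 0 <= 'Im y by apply: Im_rootC_ge0.
have [->|u_neq1] := eqVneq u 1; first by left.
have [->|v_neq1] := eqVneq v 1; first by right.
have lt_u : 'Re y < 'Re u.
  rewrite -uvy; apply: ReM_upper_lt => //; rewrite ?uvy //.
  exact: normC1_Re_lt1.
have lt_v : 'Re y < 'Re v.
  rewrite -uvy mulrC; apply: ReM_upper_lt => //; rewrite 1?mulrC ?uvy //.
  exact: normC1_Re_lt1.
have : (u ^+ n - 1) * (u ^+ n + 1) = 0.
  by rewrite -subr_sqr -exprM muln2 u2n expr1n subrr.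
move/eqP; rewrite mulf_eq0 subr_eq0 addr_eq0 => /orP[/eqP un1|/eqP unN1].
  have vn : v ^+ n = -1 by rewrite -rootCN1_expr -uvy exprMn un1 mul1r.
  by move: (Re_rootCN1_max vn); rewrite real_leNgt ?Creal_Re // lt_v.
by move: (Re_rootCN1_max unN1); rewrite real_leNgt ?Creal_Re // lt_u.
Qed.

(* w / y ^+ j leaves the upper half plane between some j and j + 1, and there
   w / y ^+ j and y ^+ j.+1 / w split y. *)
Lemma upper_unity_root_exp_rootCN1 {w : algC} : w ^+ n.*2 = 1 -> 0 < 'Im w ->
  exists j, w = y ^+ j.
Proof.
move=> w2n Iw.
have w1 : `|w| = 1 by apply: norm_unity_root w2n; rewrite double_gt0.
have w_neq0 : w != 0 by rewrite -normr_eq0 w1 oner_eq0.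
pose upper j := 0 <= 'Im (w / y ^+ j).
have upper0 : upper 0%N by rewrite /upper expr0 divr1 ltW.
have not_upper_n : ~~ upper n.
  rewrite /upper rootCN1_expr invrN invr1 mulrN1 raddfN /=.
  by rewrite -real_ltNge ?rpredN ?Creal_Im ?real0 // oppr_lt0.
have [j _ /andP[Iu Iv]] := nat_sign_change upper0 not_upper_n.
have yj_neq0 k : y ^+ k != 0 by rewrite expf_neq0.
have [] := @rootCN1_indecomposable (w / y ^+ j) (y ^+ j.+1 / w).
- by rewrite normf_div w1 normrX norm_neg_unity_root ?rootCN1_expr // expr1n divr1.
- by [].
- rewrite -invf_div ImV mulNr oppr_ge0 pmulr_lle0 ?invr_gt0 ?exprn_gt0 ?normr_gt0 //.
    by apply: ltW; rewrite real_ltNge ?Creal_Im ?real0.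
  by rewrite mulf_neq0 ?invr_neq0.
- by rewrite exprSr; field; rewrite w_neq0 yj_neq0.
- by rewrite expr_div_n w2n -exprM mulnC exprM -muln2 exprM rootCN1_expr sqrrN !expr1n divr1.
- by move/divr1_eq ->; exists j.
- by move/divr1_eq <-; exists j.+1.
Qed.

Lemma prim_rootCN1 : (n.*2).-primitive_root y.
Proof.
have n2_gt0 : (0 < n.*2)%N by rewrite double_gt0.
have [v pv Iv] : exists2 v : algC, (n.*2).-primitive_root v & 0 < 'Im v.
  have [g pg] := C_prim_root_exists n2_gt0.
  have Ig : 'Im g != 0.
    apply: contraTneq n_gt1 => /(Creal_ImP g) g_real.
    have g2 : g ^+ 2 = 1.
      by rewrite -real_normK // (norm_unity_root n2_gt0 (prim_expr_order pg)) expr1n.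
    by move: (prim_order_dvd pg 2); rewrite g2 eqxx => /dvdn_leq; rewrite -leqNgt; lia.
  case: (real_ltgtP (Creal_Im g) (real0 _)) Ig => [Ig_lt0 _|Ig_gt0 _|//].
    by exists g^*; rewrite ?fmorph_primitive_root // Im_conj oppr_gt0.
  by exists g.
have [i vi] := upper_unity_root_exp_rootCN1 (prim_expr_order pv) Iv.
have y2n : y ^+ n.*2 = 1 by rewrite -muln2 exprM rootCN1_expr sqrrN expr1n.
have [k pk k_dvd] := prim_order_exists n2_gt0 y2n.
have n2_dvd : (n.*2 %| k)%N.
  by rewrite (prim_order_dvd pv) vi exprAC (prim_expr_order pk) expr1n.
suff <- : k = n.*2 by [].
by apply/eqP; rewrite eqn_dvd k_dvd.
Qed.

End RootCN1.

Lemma omega_prim_root n : (1 < n)%N -> n.-primitive_root (omega n).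
Proof.
move=> n_gt1; have n_dvd : (n %| n.*2)%N by rewrite -muln2 dvdn_mulr.
have n2_div : (n.*2 %/ n = 2)%N by rewrite -muln2 mulKn // ltnW.
by have := dvdn_prim_root (prim_rootCN1 n_gt1) n_dvd; rewrite n2_div.
Qed.

(* For p prime and q = p^(m-1) this is the cyclotomic polynomial Phi_(p^m). *)
Definition geom_poly {R : nzRingType} (p q : nat) : {poly R} := \sum_(k < p) 'X^(k * q).

Section GeomPoly.
Variable R : nzRingType.

Lemma coef_geom_polyM p q (G : {poly R}) i k :
  (size G <= q)%N -> (i < q)%N -> (k < p)%N -> (G * geom_poly p q)`_(i + k * q) = G`_i.
Proof.
move=> sG iq kp; rewrite mulr_sumr coef_sum (bigD1 (Ordinal kp)) //=.
rewrite coefMXn ltnNge leq_addl addnK big1 ?addr0 // => l.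
rewrite -(inj_eq val_inj) /= => l_neq_k.
rewrite coefMXn; case: ltnP => // lq_le; apply: nth_default; apply: leq_trans sG _.
have l_lt_k : (l < k)%N by nia.
have : (l * q + q <= k * q)%N by rewrite addnC -mulSn leq_mul2r l_lt_k orbT.
lia.
Qed.

Lemma size_geom_poly_le p q : (size (geom_poly p q : {poly R}) <= (p.-1 * q).+1)%N.
Proof.
apply: leq_trans (size_sum _ _ _) _; apply/bigmax_leqP => k _.
by rewrite size_polyXn ltnS leq_mul2r; have := ltn_ord k; lia.
Qed.

Lemma map_geom_poly p q (S : nzRingType) (f : {rmorphism R -> S}) :
  map_poly f (geom_poly p q) = geom_poly p q.
Proof. by rewrite rmorph_sum; apply: eq_bigr => k _; rewrite /= map_polyXn. Qed.

Lemma size_geom_poly p q : (0 < p)%N -> (0 < q)%N ->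
  size (geom_poly p q : {poly R}) = (p.-1 * q).+1.
Proof.
case: p => [//|p'] _ q_gt0.
rewrite /geom_poly big_ord_recr /= addrC size_polyDl size_polyXn //.
case: p' => [|p']; first by rewrite big_ord0 size_poly0.
by rewrite ltnS (leq_trans (size_geom_poly_le _ _)) // ltn_mul2r q_gt0 /=.
Qed.

End GeomPoly.

Lemma root_geom_poly (F : idomainType) (z : F) p q :
  z ^+ (p * q) = 1 -> z ^+ q != 1 -> root (geom_poly p q) z.
Proof.
move=> zpq zq; rewrite /root horner_sum.
under eq_bigr => k _ do rewrite hornerXn mulnC exprM.
have : (z ^+ q) ^+ p - 1 = 0 by rewrite -exprM mulnC zpq subrr.
by rewrite subrX1 => /eqP; rewrite mulf_eq0 subr_eq0 (negbTE zq).
Qed.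

Section PrimePowerRoot.
Context {p m : nat} {z : algC}.
Hypotheses (p_prime : prime p) (m_gt0 : (0 < m)%N) (z_prim : (p ^ m).-primitive_root z).
Local Notation q := (p ^ m.-1)%N.

Let p_gt0 : (0 < p)%N. Proof. exact: prime_gt0. Qed.
Let q_gt0 : (0 < q)%N. Proof. by rewrite expn_gt0 p_gt0. Qed.
Let pm_eq : (p ^ m = q * p)%N. Proof. by rewrite -expnSr prednK. Qed.
Let geom_poly_neq0 : geom_poly p q != 0 :> {poly rat}.
Proof. by rewrite -size_poly_eq0 size_geom_poly. Qed.

Lemma geom_poly_dvdp_of_root {F : {poly rat}} :
  root (map_poly ratr F) z -> (geom_poly p q %| F)%R.
Proof.
have [pz [Dpz _] dvd_pz] := minCpolyP z.
have pz_dvd : (pz %| geom_poly p q)%R.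
  rewrite -dvd_pz map_geom_poly; apply: root_geom_poly.
    by rewrite mulnC -pm_eq (prim_expr_order z_prim).
  rewrite -(prim_order_dvd z_prim) pm_eq; apply/negP => /(dvdn_leq q_gt0).
  by have := prime_gt1 p_prime; nia.
have size_pz : size pz = (p.-1 * q).+1.
  rewrite -(size_map_poly (@ratr algC)) -Dpz (minCpoly_cyclotomic z_prim).
  by rewrite size_cyclotomic totient_pfactor.
have pz_eqp : (pz %= geom_poly p q)%R.
  by rewrite -dvdp_size_eqp // size_geom_poly // size_pz.
by rewrite -(eqp_dvdl _ pz_eqp) -dvd_pz.
Qed.

Lemma coef_periodic_of_root (F : {poly rat}) i k : (size F <= p ^ m)%N ->
  root (map_poly ratr F) z -> (i < q)%N -> (k < p)%N -> F`_(i + k * q) = F`_i.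
Proof.
move=> sF Fz iq kp; have [G FE] := dvdpP _ _ (geom_poly_dvdp_of_root Fz).
rewrite FE in sF *.
have sG : (size G <= q)%N.
  have [->|G_neq0] := eqVneq G 0; first by rewrite size_poly0.
  have qp : (q * p = q + p.-1 * q)%N by rewrite -mulSn prednK // mulnC.
  by move: sF; rewrite size_mul // size_geom_poly // pm_eq qp addnS /= leq_add2r.
by rewrite coef_geom_polyM // -[in RHS](addn0 i) -(mul0n q) coef_geom_polyM.
Qed.

End PrimePowerRoot.

Lemma card_sep_sum (T : finType) (A : {set T}) (P : pred T) :
  #|[set a in A | P a]| = (\sum_(a in A) P a)%N.
Proof.
rewrite -sum1_card big_mkcond [RHS]big_mkcond /=; apply: eq_bigr => a _.
by rewrite inE; case: (a \in A); case: (P a).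
Qed.

Lemma card_dvd_fibers {T : finType} (A : {set T}) (f : T -> nat) (p : nat) {q : nat} :
  (0 < q)%N -> {in A, forall a, f a < q * p}%N ->
  #|[set a in A | (q %| f a)%N]| =
  (\sum_(k < p) #|[set a in A | f a == (k * q)%N]|)%N.
Proof.
move=> q_gt0 f_lt; under [in RHS]eq_bigr => k _ do rewrite card_sep_sum.
rewrite card_sep_sum exchange_big /=; apply: eq_bigr => a Aa.
have [q_dvd|q_ndvd] := boolP (q %| f a)%N; last first.
  rewrite big1 // => k _; apply/eqP; rewrite eqb0.
  by apply: contra q_ndvd => /eqP ->; rewrite dvdn_mull.
have fa_q : (f a %/ q < p)%N by rewrite ltn_divLR // mulnC f_lt.
rewrite (bigD1 (Ordinal fa_q)) //= divnK // eqxx big1 // => k.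
rewrite -(inj_eq val_inj) /= => k_neq; apply/eqP; rewrite eqb0.
by apply: contra k_neq => /eqP ->; rewrite mulnK.
Qed.

Lemma mulrn_pair (U V : nmodType) (x : U * V) k : x *+ k = (x.1 *+ k, x.2 *+ k).
Proof. by case: x => x1 x2; elim: k => [|k IH]; rewrite ?mulrS ?IH. Qed.

Section SymplecticCycle.
Context {n : nat}.
Hypothesis n_gt1 : (1 < n)%N.
Implicit Types (x a : 'Z_n * 'Z_n) (t : 'Z_n).

Lemma expg_mulrn x k : (x ^+ k)%g = x *+ k.
Proof. by elim: k => [|k IH] //; rewrite expgS mulrS IH. Qed.

Lemma sympl_mulrn a x k : sympl a (x *+ k) = sympl a x *+ k.
Proof. by rewrite /sympl mulrn_pair mulrnBl !mulrnAr. Qed.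

Lemma sperp_cycle a x : (a \in sperp <[x]>%g) = (sympl a x == 0).
Proof.
rewrite inE; apply/forallP/idP => [/(_ x)|/eqP ax y]; first by rewrite cycle_id.
by apply/implyP => /cycleP [k ->]; rewrite expg_mulrn sympl_mulrn ax mul0rn.
Qed.

Lemma Zp_mulrn_eq0 t k : (t *+ k == 0) = (n %| t * k)%N.
Proof. by rewrite -(inj_eq val_inj) Zp_mulrn /= [X in (_ %% X)%N](Zp_cast n_gt1). Qed.

Lemma order_Zp2_dvdn x : (#[x]%g %| n)%N.
Proof.
rewrite order_dvdn expg_mulrn mulrn_pair; apply/eqP.
by congr pair; apply/eqP; rewrite [_ == _]Zp_mulrn_eq0 dvdn_mull.
Qed.

Lemma divn_order_gt0 x : (0 < n %/ #[x]%g)%N.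
Proof. by rewrite divn_gt0 ?order_gt0 // dvdn_leq ?order_Zp2_dvdn // ltnW. Qed.

(* <a, x>_s = sympl_num x a * (n / #[x]): the exponent of the #[x]-th root of unity
   exp(2 pi i <a, x>_s / n). *)
Definition sympl_num x a : nat := (sympl a x %/ (n %/ #[x]%g))%N.

Lemma sympl_numK a x : (sympl_num x a * (n %/ #[x]%g))%N = sympl a x.
Proof.
apply: divnK; rewrite -(dvdn_pmul2r (order_gt0 x)) divnK ?order_Zp2_dvdn //.
by rewrite -Zp_mulrn_eq0 -sympl_mulrn -expg_mulrn expg_order /sympl /= !mulr0 subrr.
Qed.

Lemma sympl_num_lt a x : (sympl_num x a < #[x]%g)%N.
Proof.
rewrite ltn_divLR ?divn_order_gt0 // mulnC divnK ?order_Zp2_dvdn //.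
by rewrite -[X in (_ < X)%N](Zp_cast n_gt1) ltn_ord.
Qed.

Lemma sperp_cycle_mulrn a x k :
  (a \in sperp <[x *+ k]>%g) = (#[x]%g %| sympl_num x a * k)%N.
Proof.
rewrite sperp_cycle sympl_mulrn Zp_mulrn_eq0 -sympl_numK mulnAC.
by rewrite -[X in (X %| _)%N](divnK (order_Zp2_dvdn x)) mulnC dvdn_pmul2r ?divn_order_gt0.
Qed.

Lemma symFTE A x :
  symFT A x = \sum_(a in A) (omega n ^+ (n %/ #[x]%g)) ^+ sympl_num x a.
Proof. by apply: eq_bigr => a _; rewrite -exprM mulnC sympl_numK. Qed.

Lemma setI_sperp_cycle A x : A :&: sperp <[x]>%g = [set a in A | sympl_num x a == 0%N].
Proof.
apply/setP => a; have := sperp_cycle_mulrn a x 1.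
by rewrite in_setI mulr1n muln1 /dvdn modn_small ?sympl_num_lt // inE => ->.
Qed.

Lemma setI_sperp_cycle_mulrn A x {p q : nat} : (0 < p)%N -> #[x]%g = (q * p)%N ->
  A :&: sperp <[x *+ p]>%g = [set a in A | (q %| sympl_num x a)%N].
Proof.
move=> p_gt0 ox; apply/setP => a; rewrite in_setI sperp_cycle_mulrn ox.
by rewrite dvdn_pmul2r // inE.
Qed.

Lemma card_sympl_num_fiber {p m : nat} {x A} {k : nat} :
  prime p -> (0 < m)%N -> #[x]%g = (p ^ m)%N -> symFT A x = 0 -> (k < p)%N ->
  #|[set a in A | sympl_num x a == (k * p ^ m.-1)%N]| =
  #|[set a in A | sympl_num x a == 0%N]|.
Proof.
move=> p_prime m_gt0 ox FT0 kp.
pose F : {poly rat} := \sum_(a in A) 'X^(sympl_num x a).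
have coefF i : F`_i = #|[set a in A | sympl_num x a == i]|%:R.
  rewrite coef_sum card_sep_sum natr_sum.
  by apply: eq_bigr => a _; rewrite coefXn eq_sym.
have z_prim : (p ^ m).-primitive_root (omega n ^+ (n %/ #[x]%g)).
  by rewrite -ox dvdn_prim_root ?omega_prim_root ?order_Zp2_dvdn.
have Fz : root (map_poly ratr F) (omega n ^+ (n %/ #[x]%g)).
  rewrite /root rmorph_sum horner_sum; apply/eqP; rewrite -[RHS]FT0 symFTE.
  by apply: eq_bigr => a _; rewrite /= map_polyXn hornerXn.
have sF : (size F <= p ^ m)%N.
  rewrite -ox; apply: leq_trans (size_sum _ _ _) _; apply/bigmax_leqP => a _.
  by rewrite size_polyXn sympl_num_lt.
apply/eqP; rewrite -(eqr_nat rat) -!coefF -(add0n (k * p ^ m.-1)%N).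
by rewrite (coef_periodic_of_root p_prime m_gt0 z_prim) ?expn_gt0 ?prime_gt0.
Qed.

End SymplecticCycle.

Theorem mainTheorem1 (n p m : nat) (x : 'Z_n * 'Z_n) (A : {set 'Z_n * 'Z_n}) :
  (1 < n)%N -> prime p -> (0 < m)%N -> #[x]%g = (p ^ m)%N ->
  symFT A x = 0 ->
  #|A :&: sperp <[x *+ p]>%g| = (p * #|A :&: sperp <[x]>%g|)%N.
Proof.
move=> n_gt1 p_prime m_gt0 ox FT0.
have q_gt0 : (0 < p ^ m.-1)%N by rewrite expn_gt0 prime_gt0.
have ox_qp : #[x]%g = (p ^ m.-1 * p)%N by rewrite ox -expnSr prednK.
rewrite (setI_sperp_cycle_mulrn n_gt1 _ _ (prime_gt0 p_prime) ox_qp) setI_sperp_cycle //.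
rewrite (card_dvd_fibers A (sympl_num x) p q_gt0); last first.
  by move=> a _; rewrite -ox_qp sympl_num_lt.
under eq_bigr => k _ do rewrite (card_sympl_num_fiber n_gt1 p_prime m_gt0 ox FT0 (ltn_ord k)).
by rewrite sum_nat_const card_ord.
Qed.
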